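(* Let $k>l\ge0$ be integers, $\xi\in\mathbb{C}$, $f:\mathbb{N}\to[0,\infty)$, and $A=\xi(a^\dagger)^ka^l+\xi^*(a^\dagger)^la^k+f(a^\dagger a)$ with domain $\mathcal{D}_0$. Assume there exist $\kappa>2$ and $N\in\mathbb{N}$ such that $f(n)\ge\kappa|\xi|n^{(k+l)/2}$ for all $n\ge N$. Then $A$ is essentially self-adjoint and bounded from below.
   Context: $\mathbb{N}=\{0,1,2,\dots\}$. $\mathcal{H}$ is a separable complex Hilbert space with orthonormal basis $(\phi_n)_{n\in\mathbb{N}}$; $\mathcal{D}_0$ is the set of finite linear combinations of the $\phi_n$. The operators $a,a^\dagger$ have domain $\mathcal{D}_0$ and act by $a\phi_n=\sqrt{n}\,\phi_{n-1}$ ($a\phi_0=0$), $a^\dagger\phi_n=\sqrt{n+1}\,\phi_{n+1}$, extended linearly. $f(a^\dagger a)$ has domain $\mathcal{D}_0$ and $f(a^\dagger a)\phi_n=f(n)\phi_n$. *)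

From Stdlib Require Import Reals.
From Coquelicot Require Import Coquelicot.
Open Scope R_scope.

(* Concrete model of H: l^2(N, C), with phi_n the n-th unit sequence.
   Vectors are represented by their coordinate sequences. *)
Definition seqC := nat -> C.

Definition l2 (x : seqC) : Prop := ex_series (fun n => Cmod (x n) ^ 2).
Definition nrm2 (x : seqC) : R := Series (fun n => Cmod (x n) ^ 2).
Definition seq_sub (x y : seqC) : seqC := fun n => Cminus (x n) (y n).

(* inner product, antilinear in the first argument *)
Definition inner (x y : seqC) : C :=
  (Series (fun n => Re (Cmult (Cconj (x n)) (y n))),
   Series (fun n => Im (Cmult (Cconj (x n)) (y n)))).

(* D_0: finite linear combinations of the phi_n = finitely supported sequences *)
Definition D0 (x : seqC) : Prop :=
  exists N : nat, forall n : nat, (N <= n)%nat -> x n = RtoC 0.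

(* annihilation a phi_n = sqrt n phi_{n-1}, in coordinates *)
Definition ann (x : seqC) : seqC :=
  fun n => Cmult (RtoC (sqrt (INR (S n)))) (x (S n)).
(* creation a^dag phi_n = sqrt (n+1) phi_{n+1}, in coordinates *)
Definition cre (x : seqC) : seqC :=
  fun n => match n with
           | O => RtoC 0
           | S m => Cmult (RtoC (sqrt (INR (S m)))) (x m)
           end.

Definition op_A (k l : nat) (xi : C) (f : nat -> R) (x : seqC) : seqC :=
  fun n => Cplus (Cplus (Cmult xi (Nat.iter k cre (Nat.iter l ann x) n))
                        (Cmult (Cconj xi) (Nat.iter l cre (Nat.iter k ann x) n)))
                 (Cmult (RtoC (f n)) (x n)).

(* Operators are handled through their graphs (relations on l^2). *)
Definition graph := seqC -> seqC -> Prop.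

Definition graph_D0 (T : seqC -> seqC) : graph := fun x y => D0 x /\ y = T x.

Definition closure (G : graph) : graph := fun x y =>
  l2 x /\ l2 y /\
  forall eps : R, 0 < eps -> exists x' y', G x' y' /\
      nrm2 (seq_sub x x') < eps /\ nrm2 (seq_sub y y') < eps.

Definition adjoint (G : graph) : graph := fun y z =>
  l2 y /\ l2 z /\ forall x w, G x w -> inner w y = inner x z.

Definition self_adjoint (G : graph) : Prop := forall x y, G x y <-> adjoint G x y.

Definition essentially_self_adjoint (G : graph) : Prop := self_adjoint (closure G).

Definition bounded_below_D0 (T : seqC -> seqC) : Prop :=
  exists c : R, forall x, D0 x ->
    Im (inner x (T x)) = 0 /\ c * nrm2 x <= Re (inner x (T x)).

(* Write A = B + f(N), where the off-diagonal part B = xi a^+^k a^l + xi^* a^+^l a^k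
   moves phi_n to phi_(n +- d), d = k - l, with weights at most sqrt (Q n),
   Q n = (n + k + 1)^(k + l).  Since Q n ~ n^(k+l), the growth condition with kappa > 2
   yields 4 |xi|^2 Q n <= al f(n)^2 + be for some al < 1.  Two consequences:
   - Schur's test gives Re <x, B x> >= -2 |xi| sum sqrt (Q n) |x_n|^2
     >= - sum (f(n) + sqrt be) |x_n|^2, so A is bounded below by - sqrt be;
   - for mu^2 >= be / al the operator K = B (f - i mu)^-1 satisfies |K s|^2 <= al |s|^2,
     so A - i mu = (1 + K) (f - i mu) has dense range on D_0 by a Neumann series.
   A symmetric operator on D_0 for which A + i mu and A - i mu both have dense range is
   essentially self-adjoint, by the identity
   Im <x - y, (A - i mu) x - (z - i mu y)> = Im <y, z> - mu |x - y|^2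
   for (y, z) in the adjoint of the closure and x in D_0. *)

From Stdlib Require Import Reals Lra Lia Psatz.
From Coquelicot Require Import Coquelicot.
Open Scope R_scope.

(** * Series of real numbers *)

Lemma Series_zero : Series (fun _ => 0) = 0.
Proof.
  transitivity (0 * Series (fun _ => 0)); [|ring].
  rewrite <- Series_scal_l. apply Series_ext; intros; ring.
Qed.

Lemma ex_series_supp (a : nat -> R) (N : nat) :
  (forall n, (N <= n)%nat -> a n = 0) -> ex_series a.
Proof.
  intros Ha. exists (sum_n a N).
  enough (H : is_lim_seq (sum_n a) (sum_n a N)) by exact H.
  apply is_lim_seq_ext_loc with (fun _ => sum_n a N); [|apply is_lim_seq_const].
  exists N. intros n Hn. induction Hn as [|n Hn IH]; [reflexivity|].
  rewrite sum_Sn, <- IH, (Ha (S n)) by lia. symmetry. apply Rplus_0_r.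
Qed.

Lemma Series_nonneg (a : nat -> R) :
  (forall n, 0 <= a n) -> ex_series a -> 0 <= Series a.
Proof.
  intros Ha Hex. rewrite <- Series_zero.
  apply Series_le; [intros n; split; [lra | apply Ha] | exact Hex].
Qed.

Lemma Series_le_ex (a b : nat -> R) :
  (forall n, a n <= b n) -> ex_series a -> ex_series b -> Series a <= Series b.
Proof.
  intros Hab Ha Hb.
  assert (Hba : 0 <= Series (fun n => b n - a n)).
  { apply Series_nonneg; [intros n; specialize (Hab n); lra|].
    now apply (ex_series_minus (V := R_NormedModule)). }
  rewrite Series_minus in Hba by assumption. lra.
Qed.

Lemma Rabs_Series_le (a b : nat -> R) :
  (forall n, Rabs (a n) <= b n) -> ex_series b -> Rabs (Series a) <= Series b.
Proof.
  intros Hab Hb.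
  assert (Ha : ex_series a) by (apply (ex_series_le a b); auto).
  apply Rabs_le; split.
  - rewrite <- Series_opp. apply Series_le_ex; auto.
    + intros n. specialize (Hab n). apply Rabs_le_between in Hab. lra.
    + exact (ex_series_opp (V := R_NormedModule) b Hb).
  - apply Series_le_ex; auto. intros n. specialize (Hab n).
    apply Rabs_le_between in Hab. lra.
Qed.

Definition delay (d : nat) (g : nat -> R) (n : nat) : R :=
  if (d <=? n)%nat then g (n - d)%nat else 0.

Lemma Series_delay (d : nat) (g : nat -> R) : Series (delay d g) = Series g.
Proof.
  rewrite (Series_incr_n_aux _ d).
  - apply Series_ext. intros n. unfold delay.
    destruct (Nat.leb_spec d (d + n)); [f_equal; lia | lia].
  - intros n Hn. unfold delay. destruct (Nat.leb_spec d n); [lia | reflexivity].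
Qed.

Lemma ex_series_delay (d : nat) (g : nat -> R) : ex_series g -> ex_series (delay d g).
Proof.
  intros Hg. apply (ex_series_incr_n _ d). eapply ex_series_ext; [|exact Hg].
  intros n. cbn beta. unfold delay.
  destruct (Nat.leb_spec d (d + n)); [f_equal; lia | lia].
Qed.

Lemma ex_series_advance (d : nat) (g : nat -> R) :
  ex_series g -> ex_series (fun n => g (n + d)%nat).
Proof.
  intros Hg. apply (ex_series_incr_n _ d) in Hg.
  eapply ex_series_ext; [|exact Hg]. intros n. cbn beta. f_equal. lia.
Qed.

Lemma Series_advance_le (d : nat) (g : nat -> R) :
  (forall n, 0 <= g n) -> ex_series g -> Series (fun n => g (n + d)%nat) <= Series g.
Proof.
  intros Hg Hex.
  transitivity (Series (fun n => if (d <=? n)%nat then g n else 0)).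
  - right. rewrite (Series_incr_n_aux (fun n => if (d <=? n)%nat then g n else 0) d).
    + apply Series_ext. intros n.
      destruct (Nat.leb_spec d (d + n)); [f_equal; lia | lia].
    + intros n Hn. destruct (Nat.leb_spec d n); [lia | reflexivity].
  - apply Series_le; auto. intros n. destruct (Nat.leb d n); split; auto; lra.
Qed.

Lemma Series_delay_advance_le (d : nat) (g : nat -> R) :
  (forall n, 0 <= g n) -> ex_series g ->
  ex_series (fun n => delay d g n + g (n + d)%nat) /\
  Series (fun n => delay d g n + g (n + d)%nat) <= 2 * Series g.
Proof.
  intros Hg Hex.
  pose proof (ex_series_delay d g Hex) as Hdel. pose proof (ex_series_advance d g Hex) as Hadv.
  split; [now apply (ex_series_plus (V := R_NormedModule))|].
  rewrite Series_plus, Series_delay by assumption.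
  pose proof (Series_advance_le d g Hg Hex). lra.
Qed.

(** * Square-summable sequences *)

Lemma Rabs_Im_le_Cmod (z : C) : Rabs (Im z) <= Cmod z.
Proof.
  pose proof (Cmod2_alt z). pose proof (Cmod_ge_0 z). apply Rabs_le. split; nra.
Qed.

Lemma Cmod_le_Re_Im (z : C) : Cmod z <= Rabs (Re z) + Rabs (Im z).
Proof.
  pose proof (Cmod2_alt z). pose proof (Cmod_ge_0 z).
  pose proof (pow2_abs (Re z)). pose proof (pow2_abs (Im z)).
  pose proof (Rabs_pos (Re z)). pose proof (Rabs_pos (Im z)). nra.
Qed.

Lemma Cmod_plus_sqr_le (a b : C) : Cmod (a + b) ^ 2 <= 2 * Cmod a ^ 2 + 2 * Cmod b ^ 2.
Proof.
  rewrite !Cmod2_alt. destruct a as [a1 a2], b as [b1 b2]. unfold Re, Im; simpl.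
  pose proof (pow2_ge_0 (a1 - b1)). pose proof (pow2_ge_0 (a2 - b2)). nra.
Qed.

Lemma Cmod_conj_mult_le (a b : C) (t : R) :
  0 < t -> Cmod (Cconj a * b) <= t / 2 * Cmod a ^ 2 + / (2 * t) * Cmod b ^ 2.
Proof.
  intros Ht. rewrite Cmod_mult, Cmod_conj.
  set (x := Cmod a). set (y := Cmod b).
  replace (t / 2 * x ^ 2 + / (2 * t) * y ^ 2) with (x * y + (t * x - y) ^ 2 / (2 * t))
    by (field; lra).
  assert (0 <= (t * x - y) ^ 2 / (2 * t))
    by (apply Rmult_le_pos; [apply pow2_ge_0 | left; apply Rinv_0_lt_compat; lra]).
  lra.
Qed.

Definition seq_add (x y : seqC) : seqC := fun n => (x n + y n)%C.
Definition seq_scal (c : C) (x : seqC) : seqC := fun n => (c * x n)%C.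

Lemma D0_seq_add (a b : seqC) : D0 a -> D0 b -> D0 (seq_add a b).
Proof.
  intros [Na Ha] [Nb Hb]. exists (Nat.max Na Nb). intros n Hn. unfold seq_add.
  rewrite Ha, Hb by lia. ring.
Qed.

Lemma D0_seq_sub (a b : seqC) : D0 a -> D0 b -> D0 (seq_sub a b).
Proof.
  intros [Na Ha] [Nb Hb]. exists (Nat.max Na Nb). intros n Hn. unfold seq_sub.
  rewrite Ha, Hb by lia. ring.
Qed.

Lemma D0_seq_scal (c : C) (a : seqC) : D0 a -> D0 (seq_scal c a).
Proof. intros [N Ha]. exists N. intros n Hn. unfold seq_scal. rewrite Ha by lia. ring. Qed.

Lemma Series_dominated (u : nat -> R) (b c : seqC) (al be : R) :
  (forall n, Rabs (u n) <= al * Cmod (b n) ^ 2 + be * Cmod (c n) ^ 2) -> l2 b -> l2 c ->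
  ex_series u /\ Rabs (Series u) <= al * nrm2 b + be * nrm2 c.
Proof.
  intros Hu Hb Hc.
  assert (Hv : ex_series (fun n => al * Cmod (b n) ^ 2 + be * Cmod (c n) ^ 2))
    by exact (ex_series_plus _ _ (ex_series_scal_l al _ Hb) (ex_series_scal_l be _ Hc)).
  split; [exact (@ex_series_le R_AbsRing R_CompleteNormedModule u _ Hu Hv)|].
  unfold nrm2. rewrite <- !Series_scal_l, <- Series_plus
    by (apply (ex_series_scal_l (V := R_NormedModule)); assumption).
  now apply Rabs_Series_le.
Qed.

Lemma l2_nrm2_le (a b c : seqC) (al be : R) :
  (forall n, Cmod (a n) ^ 2 <= al * Cmod (b n) ^ 2 + be * Cmod (c n) ^ 2) -> l2 b -> l2 c ->
  l2 a /\ nrm2 a <= al * nrm2 b + be * nrm2 c.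
Proof.
  intros Ha Hb Hc.
  destruct (Series_dominated (fun n => Cmod (a n) ^ 2) b c al be) as [Hl Hn]; auto.
  - intros n. rewrite Rabs_pos_eq by apply pow2_ge_0. apply Ha.
  - split; [exact Hl | eapply Rle_trans; [apply Rle_abs | exact Hn]].
Qed.

Lemma l2_D0 (x : seqC) : D0 x -> l2 x.
Proof.
  intros [N HN]. apply (ex_series_supp _ N). intros n Hn.
  rewrite HN by assumption. rewrite Cmod_0. ring.
Qed.

Lemma l2_sub (a b : seqC) : l2 a -> l2 b -> l2 (seq_sub a b).
Proof.
  intros Ha Hb. apply (l2_nrm2_le _ a b 2 2); auto. intros n. unfold seq_sub.
  replace (a n - b n)%C with (a n + - b n)%C by ring.
  rewrite <- (Cmod_opp (b n)). apply Cmod_plus_sqr_le.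
Qed.

Lemma l2_seq_scal (c : C) (a : seqC) : l2 a -> l2 (seq_scal c a).
Proof.
  intros Ha. apply (l2_nrm2_le _ a a (Cmod c ^ 2) 0); auto. intros n.
  unfold seq_scal. rewrite Cmod_mult. lra.
Qed.

Lemma nrm2_nonneg (x : seqC) : l2 x -> 0 <= nrm2 x.
Proof. intros Hx. apply Series_nonneg; [intros; apply pow2_ge_0 | exact Hx]. Qed.

Lemma nrm2_ext (a b : seqC) : (forall n, Cmod (a n) = Cmod (b n)) -> nrm2 a = nrm2 b.
Proof. intros Hab. unfold nrm2. apply Series_ext. intros n. now rewrite Hab. Qed.

Lemma nrm2_sub_self (a : seqC) : nrm2 (seq_sub a a) = 0.
Proof.
  unfold nrm2. rewrite <- Series_zero. apply Series_ext. intros n. unfold seq_sub.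
  replace (a n - a n)%C with (RtoC 0) by ring. rewrite Cmod_0. ring.
Qed.

Lemma nrm2_sub_comm (a b : seqC) : nrm2 (seq_sub a b) = nrm2 (seq_sub b a).
Proof.
  apply nrm2_ext. intros n. unfold seq_sub.
  replace (a n - b n)%C with (- (b n - a n))%C by ring. apply Cmod_opp.
Qed.

Lemma nrm2_sub_le (a b c : seqC) :
  l2 (seq_sub a b) -> l2 (seq_sub b c) ->
  l2 (seq_sub a c) /\ nrm2 (seq_sub a c) <= 2 * nrm2 (seq_sub a b) + 2 * nrm2 (seq_sub b c).
Proof.
  apply l2_nrm2_le. intros n. unfold seq_sub.
  replace (a n - c n)%C with ((a n - b n) + (b n - c n))%C by ring. apply Cmod_plus_sqr_le.
Qed.

Definition truncate (M : nat) (w : seqC) : seqC :=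
  fun n => if (n <? M)%nat then w n else 0%C.

Lemma D0_dense (w : seqC) (eps : R) :
  l2 w -> 0 < eps -> exists w', D0 w' /\ nrm2 (seq_sub w' w) < eps.
Proof.
  intros Hw Heps.
  set (a := fun n => Cmod (w n) ^ 2).
  assert (Hlim : is_lim_seq (sum_n a) (Series a)) by exact (Series_correct a Hw).
  destruct (proj2 (is_lim_seq_spec _ _) Hlim (mkposreal eps Heps)) as [N HN].
  specialize (HN N (le_n N)). simpl in HN. rewrite sum_n_Reals in HN.
  exists (truncate (S N) w). split.
  { exists (S N). intros n Hn. unfold truncate. destruct (Nat.ltb_spec n (S N)); [lia | easy]. }
  assert (Htail : nrm2 (seq_sub (truncate (S N) w) w) = Series (fun k => a (S N + k)%nat)).
  { unfold nrm2.
    rewrite (Series_incr_n_aux (fun n => Cmod (seq_sub (truncate (S N) w) w n) ^ 2) (S N)).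
    - apply Series_ext. intros k. unfold seq_sub, truncate, a.
      destruct (Nat.ltb_spec (S N + k) (S N)); [lia|].
      replace (0 - w (S N + k)%nat)%C with (- w (S N + k)%nat)%C by ring.
      now rewrite Cmod_opp.
    - intros n Hn. unfold seq_sub, truncate. destruct (Nat.ltb_spec n (S N)); [|lia].
      replace (w n - w n)%C with (RtoC 0) by ring. rewrite Cmod_0. ring. }
  rewrite Htail. rewrite (Series_incr_n a (S N)) in HN by (lia || exact Hw).
  change (Init.Nat.pred (S N)) with N in HN. apply Rabs_lt_between in HN. lra.
Qed.

(** * The inner product *)

Ltac coord_ring :=
  unfold Re, Im, Cconj, Cmult, Cplus, Cminus, Copp, RtoC, seq_add, seq_sub, seq_scal;
  simpl; ring.

Lemma ex_series_inner (a b : seqC) : l2 a -> l2 b ->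
  ex_series (fun n => Re (Cconj (a n) * b n)) /\ ex_series (fun n => Im (Cconj (a n) * b n)).
Proof.
  intros Ha Hb. pose proof (fun n => Cmod_conj_mult_le (a n) (b n) 1 Rlt_0_1) as Hab.
  split; refine (proj1 (Series_dominated _ a b (1 / 2) (/ (2 * 1)) _ Ha Hb)); intros n.
  - eapply Rle_trans; [apply re_le_Cmod | apply Hab].
  - eapply Rle_trans; [apply Rabs_Im_le_Cmod | apply Hab].
Qed.

Lemma Cmod_inner_le (a b : seqC) (t : R) :
  0 < t -> l2 a -> l2 b -> Cmod (inner a b) <= t * nrm2 a + / t * nrm2 b.
Proof.
  intros Ht Ha Hb. pose proof (fun n => Cmod_conj_mult_le (a n) (b n) t Ht) as Hab.
  destruct (Series_dominated (fun n => Re (Cconj (a n) * b n)) a b (t / 2) (/ (2 * t)))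
    as [_ Hre]; auto.
  { intros n. eapply Rle_trans; [apply re_le_Cmod | apply Hab]. }
  destruct (Series_dominated (fun n => Im (Cconj (a n) * b n)) a b (t / 2) (/ (2 * t)))
    as [_ Him]; auto.
  { intros n. eapply Rle_trans; [apply Rabs_Im_le_Cmod | apply Hab]. }
  eapply Rle_trans; [apply Cmod_le_Re_Im|].
  change (Re (inner a b)) with (Series (fun n => Re (Cconj (a n) * b n))).
  change (Im (inner a b)) with (Series (fun n => Im (Cconj (a n) * b n))).
  replace (/ t) with (2 * / (2 * t)) by (field; lra). lra.
Qed.

Lemma inner_ext (a a' b b' : seqC) :
  (forall n, a n = a' n) -> (forall n, b n = b' n) -> inner a b = inner a' b'.
Proof.
  intros Ha Hb. unfold inner. f_equal; apply Series_ext; intros n; now rewrite Ha, Hb.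
Qed.

Lemma inner_conj (a b : seqC) : inner b a = Cconj (inner a b).
Proof.
  unfold inner, Cconj. simpl. f_equal.
  - apply Series_ext. intros n. coord_ring.
  - rewrite <- Series_opp. apply Series_ext. intros n. coord_ring.
Qed.

Lemma inner_self (a : seqC) : inner a a = RtoC (nrm2 a).
Proof.
  unfold inner, nrm2, RtoC. f_equal.
  - apply Series_ext. intros n. rewrite Cmod2_alt. coord_ring.
  - rewrite <- Series_zero. apply Series_ext. intros n. coord_ring.
Qed.

Lemma inner_plus_r (a b c : seqC) : l2 a -> l2 b -> l2 c ->
  inner a (seq_add b c) = (inner a b + inner a c)%C.
Proof.
  intros Ha Hb Hc.
  destruct (ex_series_inner a b), (ex_series_inner a c); auto.
  unfold inner, Cplus. cbn [fst snd].
  f_equal; rewrite <- Series_plus by assumption; apply Series_ext; intros n; coord_ring.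
Qed.

Lemma inner_sub_r (a b c : seqC) : l2 a -> l2 b -> l2 c ->
  inner a (seq_sub b c) = (inner a b - inner a c)%C.
Proof.
  intros Ha Hb Hc.
  destruct (ex_series_inner a b), (ex_series_inner a c); auto.
  unfold inner, Cminus, Cplus, Copp. cbn [fst snd].
  f_equal; match goal with |- _ = ?x + - ?y => change (x + - y) with (x - y) end;
    rewrite <- Series_minus by assumption; apply Series_ext; intros n; coord_ring.
Qed.

Lemma inner_scal_r (a b : seqC) (c : C) : l2 a -> l2 b ->
  inner a (seq_scal c b) = (c * inner a b)%C.
Proof.
  intros Ha Hb. destruct (ex_series_inner a b); auto.
  unfold inner, Cmult. cbn [fst snd].
  f_equal; rewrite <- !Series_scal_l;
    [rewrite <- Series_minus | rewrite <- Series_plus];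
    try (apply (ex_series_scal_l (V := R_NormedModule)); assumption);
    apply Series_ext; intros n; coord_ring.
Qed.

Lemma inner_plus_l (a b c : seqC) : l2 a -> l2 b -> l2 c ->
  inner (seq_add a b) c = (inner a c + inner b c)%C.
Proof.
  intros Ha Hb Hc. rewrite inner_conj, inner_plus_r, Cplus_conj by assumption.
  now rewrite <- !inner_conj.
Qed.

Lemma inner_sub_l (a b c : seqC) : l2 a -> l2 b -> l2 c ->
  inner (seq_sub a b) c = (inner a c - inner b c)%C.
Proof.
  intros Ha Hb Hc. rewrite inner_conj, inner_sub_r, Cminus_conj by assumption.
  now rewrite <- !inner_conj.
Qed.

Lemma inner_scal_l (a b : seqC) (c : C) : l2 a -> l2 b ->
  inner (seq_scal c a) b = (Cconj c * inner a b)%C.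
Proof.
  intros Ha Hb. rewrite inner_conj, inner_scal_r, Cmult_conj by assumption.
  now rewrite <- inner_conj.
Qed.

Lemma Cmod_inner_sub_le (a a' b b' : seqC) (delta : R) :
  l2 a -> l2 a' -> l2 b -> l2 b' -> 0 < delta <= 1 ->
  nrm2 (seq_sub a a') <= delta ^ 2 -> nrm2 (seq_sub b b') <= delta ^ 2 ->
  Cmod (inner a b - inner a' b') <= delta * (4 + 2 * nrm2 a + nrm2 b).
Proof.
  intros Ha Ha' Hb Hb' Hd Haa Hbb.
  pose proof (l2_sub a a' Ha Ha') as Hsa. pose proof (l2_sub b b' Hb Hb') as Hsb.
  replace (inner a b - inner a' b')%C
    with (inner (seq_sub a a') b + inner a' (seq_sub b b'))%C
    by (rewrite inner_sub_l, inner_sub_r by assumption; ring).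
  assert (Ha'2 : nrm2 a' <= 2 * nrm2 a + 2 * nrm2 (seq_sub a a')).
  { apply l2_nrm2_le; auto. intros n. unfold seq_sub.
    rewrite <- (Cmod_opp (a n - a' n)).
    replace (a' n) with (a n + - (a n - a' n))%C at 1 by ring. apply Cmod_plus_sqr_le. }
  pose proof (Cmod_inner_le (seq_sub a a') b (/ delta)
                ltac:(apply Rinv_0_lt_compat; lra) Hsa Hb) as H1.
  pose proof (Cmod_inner_le a' (seq_sub b b') delta ltac:(lra) Ha' Hsb) as H2.
  rewrite Rinv_inv in H1. pose proof (nrm2_nonneg b Hb). pose proof (nrm2_nonneg a Ha).
  assert (Hinv : forall r, r <= delta ^ 2 -> / delta * r <= delta).
  { intros r Hr. apply Rle_trans with (/ delta * delta ^ 2);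
      [apply Rmult_le_compat_l; [left; apply Rinv_0_lt_compat|]; lra | right; field; lra]. }
  pose proof (Hinv _ Haa). pose proof (Hinv _ Hbb).
  eapply Rle_trans; [apply Cmod_triangle|]. nra.
Qed.

Lemma eq_of_Cmod_sub_le (z z' : C) (K : R) :
  (forall delta, 0 < delta <= 1 -> Cmod (z - z') <= delta * K) -> z = z'.
Proof.
  intros Hz.
  assert (Hzz' : Cmod (z - z') = 0).
  { apply Rle_antisym; [|apply Cmod_ge_0]. apply le_epsilon. intros eps Heps.
    pose proof (Rabs_pos K). pose proof (Rle_abs K).
    set (delta := Rmin 1 (eps / (Rabs K + 1))).
    assert (Hd1 : delta <= eps / (Rabs K + 1)) by apply Rmin_r.
    assert (Hd : 0 < delta <= 1)
      by (split; [apply Rmin_pos; [lra | apply Rdiv_lt_0_compat; lra] | apply Rmin_l]).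
    assert (delta * K <= eps / (Rabs K + 1) * Rabs K) by nra.
    assert (eps / (Rabs K + 1) * Rabs K <= eps)
      by (apply Rmult_le_reg_r with (Rabs K + 1); [lra | field_simplify; nra]).
    specialize (Hz delta Hd). lra. }
  apply Cmod_eq_0 in Hzz'. replace z with ((z - z') + z')%C by ring. rewrite Hzz'. ring.
Qed.

(** * A criterion for essential self-adjointness *)

Definition dense_range_D0 (S : seqC -> seqC) : Prop :=
  forall w eps, l2 w -> 0 < eps -> exists x, D0 x /\ nrm2 (seq_sub (S x) w) < eps.

Lemma dense_range_D0_of_approx (S : seqC -> seqC) :
  (forall w eps, D0 w -> 0 < eps -> exists x, D0 x /\ nrm2 (seq_sub (S x) w) < eps) ->
  (forall x, D0 x -> l2 (S x)) -> dense_range_D0 S.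
Proof.
  intros Happrox HS w eps Hw Heps.
  destruct (D0_dense w (eps / 4) Hw ltac:(lra)) as [w' [Hw' Hww']].
  destruct (Happrox w' (eps / 4) Hw' ltac:(lra)) as [x [Hx Hxw']].
  exists x. split; [exact Hx|].
  destruct (nrm2_sub_le (S x) w' w) as [_ Hle];
    [apply l2_sub; auto using l2_D0 | apply l2_sub; auto using l2_D0 | lra].
Qed.

Section NeumannSeries.

Variable K : seqC -> seqC.
Variable al : R.
Hypothesis K_D0 : forall s, D0 s -> D0 (K s).
Hypothesis K_sub : forall a b n, K (seq_sub a b) n = (K a n - K b n)%C.
Hypothesis K_contraction : forall s, D0 s -> nrm2 (K s) <= al * nrm2 s.
Hypothesis al_bounds : 0 <= al < 1.

(* [neumann w J = sum_(i <= J) (-K)^i w], computed as [x_(J+1) = w - K x_J]. *)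
Definition neumann (w : seqC) (J : nat) : seqC := Nat.iter J (fun s => seq_sub w (K s)) w.

Lemma D0_neumann (w : seqC) (J : nat) : D0 w -> D0 (neumann w J).
Proof. intros Hw. induction J as [|J IH]; [exact Hw | apply D0_seq_sub; auto]. Qed.

Lemma nrm2_neumann_defect (w : seqC) (J : nat) : D0 w ->
  nrm2 (seq_sub (seq_add (neumann w J) (K (neumann w J))) w) <= al ^ S J * nrm2 w.
Proof.
  intros Hw. induction J as [|J IH].
  - rewrite pow_1, (nrm2_ext _ (K w)); [now apply K_contraction|].
    intros n. unfold seq_sub, seq_add. f_equal. simpl. ring.
  - set (x := neumann w J) in *. set (x' := neumann w (S J)).
    assert (Hx : D0 x) by now apply D0_neumann.
    assert (Hx' : D0 x') by now apply D0_neumann.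
    assert (Hx'x : forall n, x' n = (w n - K x n)%C) by reflexivity.
    rewrite (nrm2_ext _ (K (seq_sub x' x))).
    2:{ intros n. rewrite K_sub. unfold seq_sub, seq_add. rewrite Hx'x. f_equal. ring. }
    eapply Rle_trans; [apply K_contraction, D0_seq_sub; auto|].
    rewrite (nrm2_ext _ (seq_sub (seq_add x (K x)) w)).
    + apply Rle_trans with (al * (al ^ S J * nrm2 w));
        [apply Rmult_le_compat_l; lra | right; simpl; ring].
    + intros n. unfold seq_sub, seq_add. rewrite <- Cmod_opp, Hx'x. f_equal. ring.
Qed.

Lemma dense_range_neumann : dense_range_D0 (fun s => seq_add s (K s)).
Proof.
  apply dense_range_D0_of_approx.
  - intros w eps Hw Heps.
    pose proof (nrm2_nonneg w (l2_D0 w Hw)).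
    destruct (pow_lt_1_zero al ltac:(rewrite Rabs_pos_eq; lra) (eps / (nrm2 w + 1)))
      as [J HJ]; [apply Rdiv_lt_0_compat; lra|].
    specialize (HJ (S J) ltac:(lia)). rewrite Rabs_pos_eq in HJ by (apply pow_le; lra).
    exists (neumann w J). split; [now apply D0_neumann|].
    eapply Rle_lt_trans; [now apply nrm2_neumann_defect|].
    apply Rle_lt_trans with (eps / (nrm2 w + 1) * nrm2 w);
      [apply Rmult_le_compat_r; lra|].
    apply Rmult_lt_reg_r with (nrm2 w + 1); [lra|]. field_simplify; nra.
  - intros x Hx. apply l2_D0, D0_seq_add; auto.
Qed.

End NeumannSeries.

(* For [y = T x] this is [(T - i mu) x]; it is applied as well to points [(y, z)] of the
   adjoint. *)
Definition graph_shift (mu : R) (x y : seqC) : seqC := fun n => (y n - (0, mu) * x n)%C.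

Lemma Cmod_graph_shift_sqr_le (mu : R) (x y : seqC) (n : nat) :
  Cmod (graph_shift mu x y n) ^ 2 <= 2 * Cmod (y n) ^ 2 + 2 * mu ^ 2 * Cmod (x n) ^ 2.
Proof.
  unfold graph_shift. replace (y n - (0, mu) * x n)%C with (y n + - ((0, mu) * x n))%C by ring.
  eapply Rle_trans; [apply Cmod_plus_sqr_le|].
  rewrite Cmod_opp, Cmod_mult, Rpow_mult_distr, Cmod2_alt with (c := (0, mu)).
  unfold Re, Im; simpl. lra.
Qed.

Lemma l2_graph_shift (mu : R) (x y : seqC) : l2 x -> l2 y -> l2 (graph_shift mu x y).
Proof.
  intros Hx Hy. apply (l2_nrm2_le _ y x 2 (2 * mu ^ 2)); auto.
  apply Cmod_graph_shift_sqr_le.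
Qed.

Section EssentialSelfAdjointness.

Variable T : seqC -> seqC.
Hypothesis T_D0 : forall x, D0 x -> D0 (T x).
Hypothesis T_sym : forall x y, D0 x -> D0 y -> inner (T x) y = inner x (T y).
Local Notation G := (graph_D0 T).

Lemma Im_inner_sym (x : seqC) : D0 x -> Im (inner x (T x)) = 0.
Proof.
  intros Hx. pose proof (T_sym x x Hx Hx) as Hxx. rewrite inner_conj in Hxx.
  destruct (inner x (T x)) as [p q]. unfold Cconj in Hxx. simpl in *.
  injection Hxx. lra.
Qed.

Lemma closure_sym (x y u w : seqC) : closure G x y -> closure G u w -> inner w x = inner u y.
Proof.
  intros [Hx [Hy Hxy]] [Hu [Hw Huw]].
  apply (eq_of_Cmod_sub_le _ _ ((4 + 2 * nrm2 w + nrm2 x) + (4 + 2 * nrm2 u + nrm2 y))).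
  intros delta Hd. assert (Hd2 : 0 < delta ^ 2) by (apply pow_lt; lra).
  destruct (Hxy _ Hd2) as [x' [y' [[Hx' ->] [Hxx Hyy]]]].
  destruct (Huw _ Hd2) as [u' [w' [[Hu' ->] [Huu Hww]]]].
  assert (l2 (T u') /\ l2 (T x') /\ l2 u' /\ l2 x') as (? & ? & ? & ?)
    by (repeat split; apply l2_D0; auto).
  replace (inner w x - inner u y)%C
    with ((inner w x - inner (T u') x') + - (inner u y - inner u' (T x')))%C
    by (rewrite T_sym by assumption; ring).
  eapply Rle_trans; [apply Cmod_triangle|]. rewrite Cmod_opp.
  pose proof (Cmod_inner_sub_le w (T u') x x' delta ltac:(auto) ltac:(auto) ltac:(auto)
                ltac:(auto) Hd ltac:(lra) ltac:(lra)).
  pose proof (Cmod_inner_sub_le u u' y (T x') delta ltac:(auto) ltac:(auto) ltac:(auto)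
                ltac:(auto) Hd ltac:(lra) ltac:(lra)).
  lra.
Qed.

Lemma graph_D0_in_closure (x : seqC) : D0 x -> closure G x (T x).
Proof.
  intros Hx. split; [now apply l2_D0|]. split; [now apply l2_D0, T_D0|].
  intros eps Heps. exists x, (T x). rewrite !nrm2_sub_self. repeat split; auto.
Qed.

Lemma closure_in_adjoint (x y : seqC) : closure G x y -> adjoint (closure G) x y.
Proof.
  intros Hxy. split; [apply Hxy|]. split; [apply Hxy|].
  intros u w Huw. now apply (closure_sym x y u w).
Qed.

Definition shift_defect (mu : R) (x y z : seqC) : R :=
  nrm2 (seq_sub (graph_shift mu x (T x)) (graph_shift mu y z)).

Lemma Im_inner_graph_shift (x y z : seqC) (mu : R) :
  D0 x -> l2 y -> l2 z -> inner (T x) y = inner x z ->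
  Im (inner (seq_sub x y) (seq_sub (graph_shift mu x (T x)) (graph_shift mu y z)))
  = Im (inner y z) - mu * nrm2 (seq_sub x y).
Proof.
  intros Hx Hy Hz Hxz.
  assert (Lx : l2 x) by now apply l2_D0.
  assert (LTx : l2 (T x)) by now apply l2_D0, T_D0.
  set (v := seq_sub x y). assert (Lv : l2 v) by now apply l2_sub.
  rewrite (inner_ext v v _ (seq_sub (seq_sub (T x) z) (seq_scal (0, mu) v)));
    [| reflexivity | intros n; unfold v, graph_shift, seq_sub, seq_scal; ring].
  rewrite inner_sub_r, inner_scal_r, inner_self by auto using l2_sub, l2_seq_scal.
  unfold v. rewrite inner_sub_l, !inner_sub_r by auto using l2_sub.
  rewrite (inner_conj (T x) y), Hxz. pose proof (Im_inner_sym x Hx) as Hsym.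
  destruct (inner x (T x)), (inner x z), (inner y z).
  unfold Cconj, RtoC, Cmult, Cminus, Cplus, Copp, Im in *. simpl in *. nra.
Qed.

Lemma adjoint_defect_bound (y z x : seqC) (mu t : R) :
  adjoint (closure G) y z -> D0 x -> 0 < t ->
  Rabs (Im (inner y z) - mu * nrm2 (seq_sub x y))
  <= t * nrm2 (seq_sub x y) + / t * shift_defect mu x y z.
Proof.
  intros [Hy [Hz Hyz]] Hx Ht.
  assert (Lx : l2 x) by now apply l2_D0.
  rewrite <- Im_inner_graph_shift by auto using graph_D0_in_closure.
  eapply Rle_trans; [apply Rabs_Im_le_Cmod|].
  apply Cmod_inner_le; auto using l2_sub, l2_graph_shift, l2_D0.
Qed.

Variable mu0 : R.
Hypothesis mu0_pos : 0 < mu0.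
Hypothesis T_dense :
  forall mu, mu ^ 2 = mu0 ^ 2 -> dense_range_D0 (fun x => graph_shift mu x (T x)).

Lemma Im_inner_adjoint (y z : seqC) : adjoint (closure G) y z -> Im (inner y z) = 0.
Proof.
  intros Hadj. pose proof Hadj as [Hy [Hz _]].
  assert (Happrox : forall mu eps, mu ^ 2 = mu0 ^ 2 -> 0 < eps -> exists x, D0 x /\
            Rabs (Im (inner y z) - mu * nrm2 (seq_sub x y)) <= mu0 * nrm2 (seq_sub x y) + eps).
  { intros mu eps Hmu Heps.
    destruct (T_dense mu Hmu (graph_shift mu y z) (mu0 * eps)) as [x [Hx Hr]];
      auto using l2_graph_shift; [nra|].
    exists x. split; [exact Hx|].
    eapply Rle_trans; [apply (adjoint_defect_bound y z x mu mu0); auto|].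
    apply Rplus_le_compat_l. apply Rmult_le_reg_l with mu0; [lra|].
    rewrite <- Rmult_assoc, Rinv_r, Rmult_1_l; unfold shift_defect; lra. }
  apply Rle_antisym; apply le_epsilon; intros eps Heps.
  - destruct (Happrox (- mu0) eps) as [x [Hx Hb]]; [ring | exact Heps|].
    apply Rabs_le_between in Hb. lra.
  - destruct (Happrox mu0 eps) as [x [Hx Hb]]; [reflexivity | exact Heps|].
    apply Rabs_le_between in Hb. lra.
Qed.

Lemma adjoint_near_graph (y z x : seqC) : adjoint (closure G) y z -> D0 x ->
  mu0 ^ 2 * nrm2 (seq_sub y x) <= 4 * shift_defect mu0 x y z /\
  nrm2 (seq_sub z (T x)) <= 10 * shift_defect mu0 x y z.
Proof.
  intros Hadj Hx. pose proof Hadj as [Hy [Hz _]].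
  pose proof (adjoint_defect_bound y z x mu0 (mu0 / 2) Hadj Hx ltac:(lra)) as Hb.
  rewrite (Im_inner_adjoint y z Hadj), Rinv_div in Hb. apply Rabs_le_between in Hb.
  assert (Lx : l2 x) by now apply l2_D0.
  pose proof (nrm2_nonneg (seq_sub x y) (l2_sub x y Lx Hy)) as HV.
  rewrite nrm2_sub_comm. set (V := nrm2 (seq_sub x y)) in *.
  set (rho := shift_defect mu0 x y z) in *.
  assert (HVr : mu0 ^ 2 * V <= 4 * rho).
  { assert (Hhalf : mu0 / 2 * V <= 2 / mu0 * rho) by lra.
    apply Rmult_le_compat_l with (r := 2 * mu0) in Hhalf; [|lra].
    replace (2 * mu0 * (2 / mu0 * rho)) with (4 * rho) in Hhalf by (field; lra).
    replace (2 * mu0 * (mu0 / 2 * V)) with (mu0 ^ 2 * V) in Hhalf by (field; lra).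
    exact Hhalf. }
  split; [exact HVr|].
  destruct (l2_nrm2_le (seq_sub z (T x))
              (seq_sub (graph_shift mu0 x (T x)) (graph_shift mu0 y z))
              (seq_sub x y) 2 (2 * mu0 ^ 2)) as [_ Hle];
    auto using l2_sub, l2_graph_shift, l2_D0.
  - intros n. unfold graph_shift, seq_sub.
    replace (z n - T x n)%C
      with (- (T x n - (0, mu0) * x n - (z n - (0, mu0) * y n))
            + - ((0, mu0) * (x n - y n)))%C by ring.
    eapply Rle_trans; [apply Cmod_plus_sqr_le|].
    rewrite !Cmod_opp, Cmod_mult, Rpow_mult_distr, Cmod2_alt with (c := (0, mu0)).
    unfold Re, Im; simpl. lra.
  - change (nrm2 (seq_sub (graph_shift mu0 x (T x)) (graph_shift mu0 y z))) with rho in Hle.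
    fold V in Hle. lra.
Qed.

Lemma adjoint_in_closure (y z : seqC) : adjoint (closure G) y z -> closure G y z.
Proof.
  intros Hadj. pose proof Hadj as [Hy [Hz _]].
  split; [exact Hy|]. split; [exact Hz|]. intros eps Heps.
  assert (Hmu2 : 0 < mu0 ^ 2) by (apply pow_lt; lra).
  set (eps' := Rmin (mu0 ^ 2 * eps / 4) (eps / 10)).
  assert (Heps' : 0 < eps') by (apply Rmin_pos; [apply Rdiv_lt_0_compat|]; nra).
  assert (Heps'1 : eps' <= mu0 ^ 2 * eps / 4) by apply Rmin_l.
  assert (Heps'2 : eps' <= eps / 10) by apply Rmin_r.
  destruct (T_dense mu0 eq_refl (graph_shift mu0 y z) eps') as [x [Hx Hr]];
    auto using l2_graph_shift.
  destruct (adjoint_near_graph y z x Hadj Hx) as [HV Hz'].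
  fold (shift_defect mu0 x y z) in Hr.
  exists x, (T x). split; [split; auto|]. split; [|lra].
  apply Rmult_lt_reg_l with (mu0 ^ 2); [exact Hmu2 | lra].
Qed.

Theorem essentially_self_adjoint_of_dense_range : essentially_self_adjoint G.
Proof. intros x y. split; [apply closure_in_adjoint | apply adjoint_in_closure]. Qed.

End EssentialSelfAdjointness.

(** * Ladder operators *)

Lemma inner_cre (a b : seqC) : inner (cre a) b = inner a (ann b).
Proof.
  unfold inner. f_equal; rewrite Series_incr_1_aux;
    solve [apply Series_ext; intros n; unfold cre, ann; coord_ring | unfold cre; coord_ring].
Qed.

Lemma inner_iter_cre (m : nat) (a b : seqC) :
  inner (Nat.iter m cre a) b = inner a (Nat.iter m ann b).
Proof.
  induction m as [|m IH] in b |- *; [reflexivity|].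
  rewrite Nat.iter_succ, inner_cre, IH. now rewrite <- Nat.iter_succ_r.
Qed.

Lemma inner_iter_ann (p : nat) (a b : seqC) :
  inner (Nat.iter p ann a) b = inner a (Nat.iter p cre b).
Proof. now rewrite inner_conj, <- inner_iter_cre, <- inner_conj. Qed.

Definition ladder (m p : nat) (u : seqC) : seqC := Nat.iter m cre (Nat.iter p ann u).

Lemma inner_ladder (m p : nat) (a b : seqC) : inner (ladder m p a) b = inner a (ladder p m b).
Proof. unfold ladder. now rewrite inner_iter_cre, inner_iter_ann. Qed.

Fixpoint falling (n m : nat) : R :=
  match m with O => 1 | S m => INR n * falling (Nat.pred n) m end.

Fixpoint rising (a p : nat) : R :=
  match p with O => 1 | S p => INR a * rising (S a) p end.

Lemma iter_ann_coord (p : nat) (u : seqC) (j : nat) :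
  Nat.iter p ann u j = (sqrt (rising (S j) p) * u (j + p)%nat)%C.
Proof.
  induction p as [|p IH] in j |- *.
  - cbn. rewrite sqrt_1, Nat.add_0_r. ring.
  - rewrite Nat.iter_succ. unfold ann at 1. rewrite IH. cbn [rising].
    rewrite sqrt_mult_alt by apply pos_INR. rewrite RtoC_mult.
    replace (S j + p)%nat with (j + S p)%nat by lia. ring.
Qed.

Lemma iter_cre_coord (m : nat) (v : seqC) (n : nat) :
  Nat.iter m cre v n =
  if (m <=? n)%nat then (sqrt (falling n m) * v (n - m)%nat)%C else RtoC 0.
Proof.
  induction m as [|m IH] in n |- *.
  - cbn. rewrite sqrt_1, Nat.sub_0_r. ring.
  - rewrite Nat.iter_succ. destruct n as [|n]; [reflexivity|].
    unfold cre at 1. rewrite IH. cbn [Nat.leb falling Nat.pred Nat.sub].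
    destruct (m <=? n)%nat; [|ring].
    rewrite sqrt_mult_alt by apply pos_INR. rewrite RtoC_mult. ring.
Qed.

Definition ladder_weight (m p n : nat) : R := sqrt (falling n m) * sqrt (rising (S (n - m)) p).

Lemma ladder_coord (m p : nat) (u : seqC) (n : nat) :
  ladder m p u n =
  if (m <=? n)%nat then (ladder_weight m p n * u (n - m + p)%nat)%C else RtoC 0.
Proof.
  unfold ladder, ladder_weight. rewrite iter_cre_coord.
  destruct (m <=? n)%nat; [|reflexivity].
  rewrite iter_ann_coord, RtoC_mult. ring.
Qed.

Lemma falling_bounds (n m : nat) : 0 <= falling n m <= INR n ^ m.
Proof.
  induction m as [|m IH] in n |- *; cbn [falling pow]; [lra|].
  destruct (IH (Nat.pred n)) as [Hpos Hle]. pose proof (pos_INR n).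
  assert (INR (Nat.pred n) ^ m <= INR n ^ m)
    by (apply pow_incr; split; [apply pos_INR | apply le_INR; lia]).
  split; [now apply Rmult_le_pos|]. apply Rmult_le_compat_l; lra.
Qed.

Lemma rising_bounds (a p : nat) : 0 <= rising a p <= INR (a + p) ^ p.
Proof.
  induction p as [|p IH] in a |- *; cbn [rising pow]; [lra|].
  destruct (IH (S a)) as [Hpos Hle]. pose proof (pos_INR a).
  replace (S a + p)%nat with (a + S p)%nat in Hle by lia.
  split; [now apply Rmult_le_pos|].
  apply Rmult_le_compat; auto. apply le_INR. lia.
Qed.

Lemma ladder_weight_sqr_le (m p n : nat) :
  ladder_weight m p n ^ 2 <= INR n ^ m * INR (S (n - m) + p) ^ p.
Proof.
  unfold ladder_weight. destruct (falling_bounds n m), (rising_bounds (S (n - m)) p).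
  rewrite Rpow_mult_distr, !pow2_sqrt by assumption.
  now apply Rmult_le_compat.
Qed.

Lemma ladder_weight_nonneg (m p n : nat) : 0 <= ladder_weight m p n.
Proof. apply Rmult_le_pos; apply sqrt_pos. Qed.

Lemma Rle_sqrt_of_sqr_le (w q : R) : 0 <= w -> w ^ 2 <= q -> w <= sqrt q.
Proof. intros Hw Hq. rewrite <- (sqrt_pow2 w Hw). now apply sqrt_le_1_alt. Qed.

Lemma Cmod_ladder_le (m p : nat) (u : seqC) (n : nat) (q : R) :
  (m <= n)%nat -> INR n ^ m * INR (S (n - m) + p) ^ p <= q ->
  Cmod (ladder m p u n) <= sqrt q * Cmod (u (n - m + p)%nat).
Proof.
  intros Hmn Hq. rewrite ladder_coord. destruct (Nat.leb_spec m n); [|lia].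
  rewrite Cmod_mult, Cmod_R, Rabs_pos_eq by apply ladder_weight_nonneg.
  apply Rmult_le_compat_r; [apply Cmod_ge_0|].
  apply Rle_sqrt_of_sqr_le; [apply ladder_weight_nonneg|].
  eapply Rle_trans; [apply ladder_weight_sqr_le | exact Hq].
Qed.

Lemma ladder_lt (m p : nat) (u : seqC) (n : nat) : (n < m)%nat -> ladder m p u n = RtoC 0.
Proof. intros Hnm. rewrite ladder_coord. destruct (Nat.leb_spec m n); [lia | reflexivity]. Qed.

Lemma ladder_ext (m p : nat) (u v : seqC) (n : nat) :
  (forall j, u j = v j) -> ladder m p u n = ladder m p v n.
Proof. intros Huv. rewrite !ladder_coord. now rewrite Huv. Qed.

Lemma ladder_sub (m p : nat) (u v : seqC) (n : nat) :
  ladder m p (seq_sub u v) n = (ladder m p u n - ladder m p v n)%C.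
Proof. rewrite !ladder_coord. unfold seq_sub. destruct (m <=? n)%nat; ring. Qed.

Lemma D0_ladder (m p : nat) (u : seqC) : D0 u -> D0 (ladder m p u).
Proof.
  intros [N HN]. exists (N + m)%nat. intros n Hn. rewrite ladder_coord.
  destruct (Nat.leb_spec m n); [|reflexivity]. rewrite HN by lia. ring.
Qed.

(** * The operator A *)

Definition diag (g : nat -> R) (u : seqC) : seqC := fun n => (g n * u n)%C.

Lemma inner_diag (g : nat -> R) (a b : seqC) : inner (diag g a) b = inner a (diag g b).
Proof. unfold inner. f_equal; apply Series_ext; intros n; unfold diag; coord_ring. Qed.

Lemma D0_diag (g : nat -> R) (u : seqC) : D0 u -> D0 (diag g u).
Proof. intros [N HN]. exists N. intros n Hn. unfold diag. rewrite HN by lia. ring. Qed.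

Definition weighted (w : nat -> R) (u : seqC) (j : nat) : R := w j * Cmod (u j) ^ 2.

Lemma ex_series_weighted (w : nat -> R) (u : seqC) : D0 u -> ex_series (weighted w u).
Proof.
  intros [N HN]. apply (ex_series_supp _ N). intros n Hn. unfold weighted.
  rewrite HN, Cmod_0 by exact Hn. ring.
Qed.

Lemma weighted_nonneg (w : nat -> R) (u : seqC) (j : nat) :
  0 <= w j -> 0 <= weighted w u j.
Proof. intros Hw. apply Rmult_le_pos; [exact Hw | apply pow2_ge_0]. Qed.

Lemma mult_le_amgm (X Z c s1 s2 : R) :
  0 <= c -> c <= s1 -> c <= s2 -> X * (c * Z) <= (s1 * X ^ 2 + s2 * Z ^ 2) / 2.
Proof.
  intros Hc Hs1 Hs2.
  assert (0 <= c * (X - Z) ^ 2) by (apply Rmult_le_pos; [lra | apply pow2_ge_0]).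
  assert (0 <= (s1 - c) * X ^ 2) by (apply Rmult_le_pos; [lra | apply pow2_ge_0]).
  assert (0 <= (s2 - c) * Z ^ 2) by (apply Rmult_le_pos; [lra | apply pow2_ge_0]).
  nra.
Qed.

Lemma pow_1_plus_le (x : R) (p : nat) : 0 <= x <= 1 -> (1 + x) ^ p <= 1 + x * (INR p * 2 ^ p).
Proof.
  intros Hx. induction p as [|p IH]; [simpl; lra|].
  rewrite S_INR. cbn [pow]. pose proof (pow_R1_Rle 2 p ltac:(lra)). pose proof (pos_INR p).
  assert (0 <= x * (INR p * 2 ^ p)) by (apply Rmult_le_pos; [lra | nra]).
  apply Rle_trans with ((1 + x) * (1 + x * (INR p * 2 ^ p))); [apply Rmult_le_compat_l; lra|].
  nra.
Qed.

Lemma pow_add_le_eventually (s p : nat) (eta : R) :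
  0 < eta -> exists J, forall j, (J <= j)%nat -> INR (j + s) ^ p <= (1 + eta) * INR j ^ p.
Proof.
  intros Heta. set (c := INR s * (INR p * 2 ^ p)).
  destruct (INR_archimed eta c Heta) as [J HJ]. exists (J + s + 1)%nat. intros j Hj.
  assert (Hj0 : 0 < INR j) by (apply lt_0_INR; lia).
  assert (Hsj : INR s <= INR j) by (apply le_INR; lia).
  assert (HJj : INR J <= INR j) by (apply le_INR; lia).
  set (x := INR s / INR j).
  assert (Hx : 0 <= x <= 1).
  { unfold x. split; [apply Rmult_le_pos; [apply pos_INR | left; apply Rinv_0_lt_compat; lra]|].
    apply Rmult_le_reg_r with (INR j); [lra|]. field_simplify; lra. }
  replace (INR (j + s)) with (INR j * (1 + x)) by (unfold x; rewrite plus_INR; field; lra).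
  rewrite Rpow_mult_distr, Rmult_comm. apply Rmult_le_compat_r; [apply pow_le; lra|].
  eapply Rle_trans; [apply pow_1_plus_le; exact Hx|].
  replace (x * (INR p * 2 ^ p)) with (c / INR j) by (unfold x, c; field; lra).
  enough (c / INR j <= eta) by lra.
  apply Rmult_le_reg_r with (INR j); [lra|]. field_simplify; [|lra]. nra.
Qed.

Section Operator.

Variables (k l : nat) (xi : C) (f : nat -> R).
Local Notation d := (k - l)%nat.
Local Notation A := (op_A k l xi f).

Definition offdiag (u : seqC) : seqC :=
  seq_add (seq_scal xi (ladder k l u)) (seq_scal (Cconj xi) (ladder l k u)).

Lemma op_A_split (x : seqC) : A x = seq_add (offdiag x) (diag f x).
Proof. reflexivity. Qed.

Lemma D0_offdiag (u : seqC) : D0 u -> D0 (offdiag u).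
Proof. intros Hu. apply D0_seq_add; apply D0_seq_scal, D0_ladder, Hu. Qed.

Lemma D0_op_A (x : seqC) : D0 x -> D0 (A x).
Proof.
  intros Hx. rewrite op_A_split. apply D0_seq_add; [apply D0_offdiag | apply D0_diag]; auto.
Qed.

Lemma op_A_sym (x y : seqC) : D0 x -> D0 y -> inner (A x) y = inner x (A y).
Proof.
  intros Hx Hy. assert (Hl2 : forall u, D0 u -> l2 u) by exact l2_D0.
  rewrite !op_A_split. unfold offdiag.
  rewrite inner_plus_l, !inner_plus_r, inner_plus_l, !inner_scal_l, !inner_scal_r,
    !inner_ladder, inner_diag, Cconj_conj
    by auto 6 using D0_seq_add, D0_seq_scal, D0_ladder, D0_diag.
  ring.
Qed.

(* Bounds the squared weights of [ladder k l] and [ladder l k] at both ends of each shift. *)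
Definition Q (j : nat) : R := INR (j + k + 1) ^ (k + l).

Lemma Q_nonneg (j : nat) : 0 <= Q j.
Proof. apply pow_le, pos_INR. Qed.

Lemma Q_mono (i j : nat) : (i <= j)%nat -> Q i <= Q j.
Proof. intros Hij. apply pow_incr. split; [apply pos_INR | apply le_INR; lia]. Qed.

(* For large [j], [Q j <= (1 + eta) j^(k+l)] with [4 (1 + eta) = al kappa^2]; the factor
   [al = (kappa^2 + 4) / (2 kappa^2)] is below 1 exactly because [kappa > 2]. *)
Lemma Q_le_eventually (kappa : R) (N : nat) :
  2 < kappa ->
  (forall n : nat, (N <= n)%nat -> kappa * Cmod xi * sqrt (INR n ^ (k + l)) <= f n) ->
  exists J, forall j, (J <= j)%nat ->
    4 * Cmod xi ^ 2 * Q j <= (kappa ^ 2 + 4) / (2 * kappa ^ 2) * f j ^ 2.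
Proof.
  intros Hkappa Hgrowth.
  set (eta := (kappa ^ 2 - 4) / 8). assert (Heta : 0 < eta) by (unfold eta; nra).
  destruct (pow_add_le_eventually (k + 1) (k + l) eta Heta) as [J HJ].
  exists (J + N)%nat. intros j Hj.
  assert (HQ : Q j <= (1 + eta) * INR j ^ (k + l))
    by (unfold Q; rewrite <- Nat.add_assoc; apply HJ; lia).
  assert (Hpow : 0 <= INR j ^ (k + l)) by (apply pow_le, pos_INR).
  assert (Hf2 : (kappa * Cmod xi) ^ 2 * INR j ^ (k + l) <= f j ^ 2).
  { rewrite <- (pow2_sqrt (INR j ^ (k + l))) by exact Hpow.
    rewrite <- Rpow_mult_distr. apply pow_incr. split; [|apply Hgrowth; lia].
    apply Rmult_le_pos; [pose proof (Cmod_ge_0 xi); nra | apply sqrt_pos]. }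
  pose proof (pow2_ge_0 (Cmod xi)).
  apply Rle_trans with (4 * Cmod xi ^ 2 * ((1 + eta) * INR j ^ (k + l)));
    [apply Rmult_le_compat_l; lra|].
  replace (4 * Cmod xi ^ 2 * ((1 + eta) * INR j ^ (k + l)))
    with ((kappa ^ 2 + 4) / (2 * kappa ^ 2) * ((kappa * Cmod xi) ^ 2 * INR j ^ (k + l)))
    by (unfold eta; field; lra).
  apply Rmult_le_compat_l; [apply Rlt_le, Rdiv_lt_0_compat; nra | exact Hf2].
Qed.

Lemma Q_le_of_growth :
  (exists (kappa : R) (N : nat), 2 < kappa /\
     forall n : nat, (N <= n)%nat -> kappa * Cmod xi * sqrt (INR n ^ (k + l)) <= f n) ->
  exists al be, 0 < al < 1 /\ 0 <= be /\
    forall j, 4 * Cmod xi ^ 2 * Q j <= al * f j ^ 2 + be.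
Proof.
  intros [kappa [N [Hkappa Hgrowth]]].
  destruct (Q_le_eventually kappa N Hkappa Hgrowth) as [J HJ].
  exists ((kappa ^ 2 + 4) / (2 * kappa ^ 2)), (4 * Cmod xi ^ 2 * Q J).
  pose proof (pow2_ge_0 (Cmod xi)).
  assert (Hal : 0 < (kappa ^ 2 + 4) / (2 * kappa ^ 2) < 1).
  { split; [apply Rdiv_lt_0_compat; nra|].
    apply Rmult_lt_reg_r with (2 * kappa ^ 2); [nra|]. field_simplify; nra. }
  assert (Hbe : 0 <= 4 * Cmod xi ^ 2 * Q J) by (apply Rmult_le_pos; [lra | apply Q_nonneg]).
  split; [exact Hal|]. split; [exact Hbe|].
  intros j. pose proof (pow2_ge_0 (f j)).
  assert (0 <= (kappa ^ 2 + 4) / (2 * kappa ^ 2) * f j ^ 2) by (apply Rmult_le_pos; lra).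
  destruct (Nat.le_gt_cases J j) as [Hj|Hj]; [specialize (HJ j Hj); lra|].
  assert (Q j <= Q J) by (apply Q_mono; lia).
  assert (4 * Cmod xi ^ 2 * Q j <= 4 * Cmod xi ^ 2 * Q J) by (apply Rmult_le_compat_l; lra).
  lra.
Qed.

Hypothesis l_lt_k : (l < k)%nat.

Lemma Cmod_ladder_kl (u : seqC) (n : nat) :
  Cmod (ladder k l u n) <=
  if (k <=? n)%nat then sqrt (Q (n - d)) * Cmod (u (n - d)%nat) else 0.
Proof.
  destruct (Nat.leb_spec k n); [|rewrite ladder_lt, Cmod_0 by lia; lra].
  replace (n - d)%nat with (n - k + l)%nat at 2 by lia.
  apply Cmod_ladder_le; [lia|]. unfold Q. rewrite pow_add.
  apply Rmult_le_compat; try apply pow_le, pos_INR;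
    apply pow_incr; (split; [apply pos_INR | apply le_INR; lia]).
Qed.

Lemma Cmod_ladder_lk (u : seqC) (n : nat) :
  Cmod (ladder l k u n) <=
  if (l <=? n)%nat then sqrt (Q n) * Cmod (u (n + d)%nat) else 0.
Proof.
  destruct (Nat.leb_spec l n); [|rewrite ladder_lt, Cmod_0 by lia; lra].
  replace (n + d)%nat with (n - l + k)%nat by lia.
  apply Cmod_ladder_le; [lia|]. unfold Q. rewrite pow_add, Rmult_comm.
  apply Rmult_le_compat; try apply pow_le, pos_INR;
    apply pow_incr; (split; [apply pos_INR | apply le_INR; lia]).
Qed.

Lemma Cmod_offdiag_le (u : seqC) (n : nat) :
  Cmod (offdiag u n) <=
  Cmod xi * ((if (k <=? n)%nat then sqrt (Q (n - d)) * Cmod (u (n - d)%nat) else 0)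
             + (if (l <=? n)%nat then sqrt (Q n) * Cmod (u (n + d)%nat) else 0)).
Proof.
  unfold offdiag, seq_add, seq_scal. eapply Rle_trans; [apply Cmod_triangle|].
  rewrite !Cmod_mult, Cmod_conj, Rmult_plus_distr_l.
  pose proof (Cmod_ge_0 xi).
  apply Rplus_le_compat; apply Rmult_le_compat_l;
    auto using Cmod_ladder_kl, Cmod_ladder_lk.
Qed.

Lemma Cmod_offdiag_sqr_le (u : seqC) (n : nat) :
  Cmod (offdiag u n) ^ 2
  <= 2 * Cmod xi ^ 2 * (delay d (weighted Q u) n + weighted Q u (n + d)%nat).
Proof.
  pose proof (Cmod_offdiag_le u n) as Hoff. pose proof (Cmod_ge_0 (offdiag u n)).
  set (a := if (k <=? n)%nat then _ else _) in Hoff.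
  set (b := if (l <=? n)%nat then _ else _) in Hoff.
  assert (Ha : 0 <= a /\ a ^ 2 <= delay d (weighted Q u) n).
  { unfold a, delay, weighted. destruct (Nat.leb_spec k n), (Nat.leb_spec d n); try lia.
    - rewrite Rpow_mult_distr, pow2_sqrt by apply Q_nonneg.
      split; [apply Rmult_le_pos; [apply sqrt_pos | apply Cmod_ge_0] | lra].
    - rewrite pow_i by lia. split; [lra | apply weighted_nonneg, Q_nonneg].
    - rewrite pow_i by lia. lra. }
  assert (Hb : 0 <= b /\ b ^ 2 <= weighted Q u (n + d)%nat).
  { unfold b, weighted. destruct (Nat.leb_spec l n).
    - rewrite Rpow_mult_distr, pow2_sqrt by apply Q_nonneg.
      split; [apply Rmult_le_pos; [apply sqrt_pos | apply Cmod_ge_0]|].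
      apply Rmult_le_compat_r; [apply pow2_ge_0 | apply Q_mono; lia].
    - rewrite pow_i by lia. split; [lra | apply weighted_nonneg, Q_nonneg]. }
  pose proof (Cmod_ge_0 xi).
  apply Rle_trans with ((Cmod xi * (a + b)) ^ 2); [apply pow_incr; lra|].
  rewrite Rpow_mult_distr, (Rmult_comm 2), Rmult_assoc. pose proof (pow2_ge_0 (a - b)).
  apply Rmult_le_compat_l; [apply pow2_ge_0 | nra].
Qed.

Lemma nrm2_offdiag_le (u : seqC) :
  D0 u -> nrm2 (offdiag u) <= 4 * Cmod xi ^ 2 * Series (weighted Q u).
Proof.
  intros Hu.
  destruct (Series_delay_advance_le d (weighted Q u)
              (fun j => weighted_nonneg _ u j (Q_nonneg j)) (ex_series_weighted Q u Hu))
    as [Hex Hle].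
  apply Rle_trans
    with (Series (fun n => 2 * Cmod xi ^ 2 * (delay d (weighted Q u) n
                                              + weighted Q u (n + d)%nat))).
  - apply Series_le; [|exact (ex_series_scal_l (V := R_NormedModule) _ _ Hex)].
    intros n. split; [apply pow2_ge_0 | apply Cmod_offdiag_sqr_le].
  - rewrite Series_scal_l. pose proof (pow2_ge_0 (Cmod xi)). nra.
Qed.

Lemma Re_conj_offdiag_ge (x : seqC) (n : nat) :
  let g := weighted (fun j => sqrt (Q j)) x in
  - (Cmod xi / 2) * (2 * g n + (delay d g n + g (n + d)%nat))
  <= Re (Cconj (x n) * offdiag x n).
Proof.
  intros g. pose proof (Cmod_offdiag_le x n) as Hoff.
  assert (Hg0 : forall j, 0 <= g j) by (intros j; apply weighted_nonneg, sqrt_pos).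
  set (a := if (k <=? n)%nat then _ else _) in Hoff.
  set (b := if (l <=? n)%nat then _ else _) in Hoff.
  pose proof (Cmod_ge_0 xi). pose proof (Cmod_ge_0 (x n)).
  assert (Ha : Cmod (x n) * a <= (g n + delay d g n) / 2).
  { unfold a, delay. destruct (Nat.leb_spec k n), (Nat.leb_spec d n); try lia.
    1: apply mult_le_amgm; [apply sqrt_pos | apply sqrt_le_1_alt, Q_mono; lia | lra].
    all: pose proof (Hg0 n); pose proof (Hg0 (n - d)%nat); lra. }
  assert (Hb : Cmod (x n) * b <= (g n + g (n + d)%nat) / 2).
  { unfold b. destruct (Nat.leb_spec l n).
    - apply mult_le_amgm; [apply sqrt_pos | lra | apply sqrt_le_1_alt, Q_mono; lia].
    - pose proof (Hg0 n). pose proof (Hg0 (n + d)%nat). lra. }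
  pose proof (re_le_Cmod (Cconj (x n) * offdiag x n)) as Hre.
  rewrite Cmod_mult, Cmod_conj in Hre. apply Rabs_le_between in Hre.
  assert (Cmod (x n) * Cmod (offdiag x n) <= Cmod (x n) * (Cmod xi * (a + b)))
    by (apply Rmult_le_compat_l; assumption).
  nra.
Qed.

Lemma Re_inner_offdiag_ge (x : seqC) :
  D0 x -> - (2 * Cmod xi) * Series (weighted (fun j => sqrt (Q j)) x)
          <= Re (inner x (offdiag x)).
Proof.
  intros Hx. set (g := weighted (fun j => sqrt (Q j)) x).
  pose proof (ex_series_weighted (fun j => sqrt (Q j)) x Hx) as Hg.
  destruct (Series_delay_advance_le d g (fun j => weighted_nonneg _ x j (sqrt_pos _)) Hg)
    as [Hex Hle].
  change (Re (inner x (offdiag x))) with (Series (fun n => Re (Cconj (x n) * offdiag x n))).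
  eapply Rle_trans; [|apply (Series_le_ex _ _ (Re_conj_offdiag_ge x))].
  - rewrite Series_scal_l, Series_plus, Series_scal_l by
      (assumption || exact (ex_series_scal_l (V := R_NormedModule) 2 _ Hg)).
    pose proof (Cmod_ge_0 xi). fold g. nra.
  - apply (ex_series_scal_l (V := R_NormedModule)).
    exact (ex_series_plus (V := R_NormedModule) _ _
             (ex_series_scal_l (V := R_NormedModule) 2 _ Hg) Hex).
  - apply ex_series_inner; apply l2_D0; auto using D0_offdiag.
Qed.

Section RelativeBound.

Variables al be : R.
Hypothesis f_nonneg : forall n, 0 <= f n.
Hypothesis al_bounds : 0 < al < 1.
Hypothesis be_nonneg : 0 <= be.
Hypothesis Q_le : forall j, 4 * Cmod xi ^ 2 * Q j <= al * f j ^ 2 + be.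

Lemma two_xi_sqrt_Q_le (j : nat) : 2 * Cmod xi * sqrt (Q j) <= f j + sqrt be.
Proof.
  pose proof (Cmod_ge_0 xi). pose proof (sqrt_pos (Q j)). pose proof (sqrt_pos be).
  pose proof (f_nonneg j). pose proof (Q_le j). pose proof (pow2_sqrt be be_nonneg).
  pose proof (pow2_sqrt (Q j) (Q_nonneg j)).
  assert (0 <= 2 * Cmod xi * sqrt (Q j)) by (apply Rmult_le_pos; lra).
  assert ((2 * Cmod xi * sqrt (Q j)) ^ 2 <= (f j + sqrt be) ^ 2).
  { replace ((2 * Cmod xi * sqrt (Q j)) ^ 2) with (4 * Cmod xi ^ 2 * sqrt (Q j) ^ 2) by ring.
    assert (al * f j ^ 2 <= f j ^ 2) by (pose proof (pow2_ge_0 (f j)); nra).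
    nra. }
  nra.
Qed.

Lemma op_A_Re_inner_ge (x : seqC) : D0 x -> - sqrt be * nrm2 x <= Re (inner x (A x)).
Proof.
  intros Hx. rewrite op_A_split, inner_plus_r by auto using l2_D0, D0_offdiag, D0_diag.
  change (Re (?a + ?b)%C) with (Re a + Re b).
  change (Re (inner x (diag f x))) with (Series (fun n => Re (Cconj (x n) * diag f x n))).
  rewrite (Series_ext _ (weighted f x))
    by (intros n; unfold weighted; rewrite Cmod2_alt; unfold diag; coord_ring).
  pose proof (Re_inner_offdiag_ge x Hx).
  pose proof (ex_series_weighted f x Hx) as Hf.
  pose proof (ex_series_weighted (fun j => sqrt (Q j)) x Hx) as Hg.
  assert (Hcomb : Series (fun n => - sqrt be * Cmod (x n) ^ 2)
                  <= Series (fun n => weighted f x n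
                                      - 2 * Cmod xi * weighted (fun j => sqrt (Q j)) x n)).
  { apply Series_le_ex.
    - intros n. unfold weighted.
      pose proof (two_xi_sqrt_Q_le n). pose proof (pow2_ge_0 (Cmod (x n))). nra.
    - exact (ex_series_scal_l (V := R_NormedModule) _ _ (l2_D0 x Hx)).
    - apply (ex_series_minus (V := R_NormedModule)); [exact Hf|].
      exact (ex_series_scal_l (V := R_NormedModule) _ _ Hg). }
  rewrite Series_scal_l, Series_minus, Series_scal_l in Hcomb by
    (assumption || exact (ex_series_scal_l (V := R_NormedModule) _ _ Hg)).
  fold (nrm2 x) in Hcomb. lra.
Qed.

Definition resolvent (mu : R) (s : seqC) : seqC := fun n => Cdiv (s n) (f n, - mu).

Lemma resolvent_denom_neq0 (mu : R) (n : nat) : mu <> 0 -> (f n, - mu) <> RtoC 0.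
Proof. intros Hmu E. injection E. lra. Qed.

Lemma D0_resolvent (mu : R) (s : seqC) : D0 s -> D0 (resolvent mu s).
Proof.
  intros [N HN]. exists N. intros n Hn. unfold resolvent. rewrite HN by lia. unfold Cdiv. ring.
Qed.

Lemma graph_shift_op_A_resolvent (mu : R) (s : seqC) (n : nat) : mu <> 0 ->
  graph_shift mu (resolvent mu s) (A (resolvent mu s)) n = (s n + offdiag (resolvent mu s) n)%C.
Proof.
  intros Hmu. pose proof (resolvent_denom_neq0 mu n Hmu) as Hden.
  unfold graph_shift. rewrite op_A_split. unfold seq_add, diag, resolvent.
  replace (RtoC (f n)) with (Cplus (f n, - mu) (0, mu))
    by (unfold RtoC, Cplus; simpl; f_equal; ring).
  field. exact Hden.
Qed.

Lemma nrm2_offdiag_resolvent_le (mu : R) (s : seqC) :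
  mu <> 0 -> be <= al * mu ^ 2 -> D0 s -> nrm2 (offdiag (resolvent mu s)) <= al * nrm2 s.
Proof.
  intros Hmu Hbe Hs.
  eapply Rle_trans; [apply nrm2_offdiag_le, D0_resolvent, Hs|].
  rewrite <- Series_scal_l. unfold nrm2. rewrite <- Series_scal_l.
  apply Series_le_ex.
  - intros n. unfold weighted, resolvent.
    rewrite Cmod_div by now apply resolvent_denom_neq0.
    assert (Hden : Cmod (f n, - mu) ^ 2 = f n ^ 2 + mu ^ 2)
      by (rewrite Cmod2_alt; unfold Re, Im; simpl; ring).
    assert (Hpos : 0 < Cmod (f n, - mu))
      by (apply Cmod_gt_0, resolvent_denom_neq0, Hmu).
    unfold Rdiv. rewrite Rpow_mult_distr, pow_inv, Hden.
    pose proof (Q_le n). pose proof (pow2_ge_0 (Cmod (s n))).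
    assert (Hfm : 0 < f n ^ 2 + mu ^ 2) by (rewrite <- Hden; apply pow_lt, Hpos).
    assert (4 * Cmod xi ^ 2 * Q n <= al * (f n ^ 2 + mu ^ 2)) by lra.
    replace (4 * Cmod xi ^ 2 * (Q n * (Cmod (s n) ^ 2 * / (f n ^ 2 + mu ^ 2))))
      with (4 * Cmod xi ^ 2 * Q n * / (f n ^ 2 + mu ^ 2) * Cmod (s n) ^ 2) by ring.
    apply Rmult_le_compat_r; [lra|].
    apply Rmult_le_reg_r with (f n ^ 2 + mu ^ 2); [lra|].
    field_simplify; lra.
  - apply (ex_series_scal_l (V := R_NormedModule)), ex_series_weighted, D0_resolvent, Hs.
  - exact (ex_series_scal_l (V := R_NormedModule) _ _ (l2_D0 s Hs)).
Qed.

Lemma offdiag_resolvent_sub (mu : R) (a b : seqC) (n : nat) :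
  offdiag (resolvent mu (seq_sub a b)) n
  = (offdiag (resolvent mu a) n - offdiag (resolvent mu b) n)%C.
Proof.
  unfold offdiag, seq_add, seq_scal.
  rewrite !(ladder_ext _ _ (resolvent mu (seq_sub a b))
                       (seq_sub (resolvent mu a) (resolvent mu b)))
    by (intros j; unfold resolvent, seq_sub, Cdiv; ring).
  rewrite !ladder_sub. ring.
Qed.

Lemma dense_range_op_A (mu : R) :
  mu <> 0 -> be <= al * mu ^ 2 -> dense_range_D0 (fun x => graph_shift mu x (A x)).
Proof.
  intros Hmu Hbe w eps Hw Heps.
  destruct (dense_range_neumann (fun s => offdiag (resolvent mu s)) al
              (fun s Hs => D0_offdiag _ (D0_resolvent mu s Hs))
              (offdiag_resolvent_sub mu)
              (fun s Hs => nrm2_offdiag_resolvent_le mu s Hmu Hbe Hs)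
              ltac:(lra) w eps Hw Heps) as [s [Hs Hr]].
  exists (resolvent mu s). split; [now apply D0_resolvent|].
  rewrite (nrm2_ext _ (seq_sub (seq_add s (offdiag (resolvent mu s))) w)); [exact Hr|].
  intros n. unfold seq_sub, seq_add at 1. now rewrite graph_shift_op_A_resolvent.
Qed.

End RelativeBound.

End Operator.

Theorem corollary3p6 (k l : nat) (xi : C) (f : nat -> R) :
  (l < k)%nat ->
  (forall n, 0 <= f n) ->
  (exists (kappa : R) (N : nat), 2 < kappa /\
     forall n : nat, (N <= n)%nat ->
       kappa * Cmod xi * sqrt (INR n ^ (k + l)) <= f n) ->
  essentially_self_adjoint (graph_D0 (op_A k l xi f)) /\
  bounded_below_D0 (op_A k l xi f).
Proof.
  intros Hlk Hf Hgrowth.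
  destruct (Q_le_of_growth k l xi f Hgrowth) as (al & be & Hal & Hbe & HQ).
  split.
  - set (mu0 := (be + 1) / al).
    assert (Hmu0 : 0 < mu0) by (apply Rdiv_lt_0_compat; lra).
    apply (essentially_self_adjoint_of_dense_range _
             (D0_op_A k l xi f) (op_A_sym k l xi f) mu0 Hmu0).
    intros mu Hmu. apply (dense_range_op_A k l xi f Hlk al be); auto.
    + intros ->. rewrite pow_i in Hmu by lia. nra.
    + rewrite Hmu. unfold mu0.
      replace (al * ((be + 1) / al) ^ 2) with ((be + 1) ^ 2 / al) by (field; lra).
      apply Rmult_le_reg_r with al; [lra|]. field_simplify; nra.
  - exists (- sqrt be). intros x Hx. split.
    + exact (Im_inner_sym _ (op_A_sym k l xi f) x Hx).
    + exact (op_A_Re_inner_ge k l xi f Hlk al be Hf Hal Hbe HQ x Hx).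
Qed.
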